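(* For any $n\ge0$, $\mathsf{R}\subseteq[n]$ and $r\in\mathcal{Y}_n$, $\gamma(r)|_{\mathsf{R}}=\gamma(r|_{\mathsf{R}})$.
   Context: Permutations in one-line notation; $\mathrm{st}(a_1,..,a_p)$ is the permutation with the same relative order as distinct integers $a_i$; $\mathrm{id}_0$ is the empty permutation. For $\sigma\in\mathfrak{S}_p,\tau\in\mathfrak{S}_q$, $\sigma\vee\tau=(\sigma(1)+q,..,\sigma(p)+q,p+q+1,\tau(1),..,\tau(q))$. Trees: $\mathcal{Y}_n$ = rooted planar binary trees with $n$ internal nodes, $\mathcal{Y}_0=\{|\}$; $s\vee t$ = root with left subtree $s$, right subtree $t$; each $t\neq|$ is uniquely $t_l\vee t_r$. $\lambda(\mathrm{id}_0)=|$, $\lambda(\sigma)=\lambda(\mathrm{st}(\sigma(1..j-1)))\vee\lambda(\mathrm{st}(\sigma(j+1..n)))$ where $j=\sigma^{-1}(n)$; $\gamma(|)=\mathrm{id}_0$, $\gamma(t)=\gamma(t_l)\vee\gamma(t_r)$. For $\mathsf{R}=\{R_1<\dots<R_p\}\subseteq[n]$ and $\rho\in\mathfrak{S}_n$, $\rho|_{\mathsf{R}}=\mathrm{st}(\rho(R_1),\dots,\rho(R_p))$; for $r\in\mathcal{Y}_n$, $r|_{\mathsf{R}}=\lambda(\gamma(r)|_{\mathsf{R}})$. *)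

From mathcomp Require Import all_boot.
Set Implicit Arguments. Unset Strict Implicit. Unset Printing Implicit Defensive.

(* Permutations in one-line notation: a permutation of [n] is the seq
   [:: s(1); ...; s(n)] of nats (values in 1..n). *)

Definition st (s : seq nat) : seq nat :=
  [seq (count (fun y => y < x) s).+1 | x <- s].

Definition pvee (s t : seq nat) : seq nat :=
  let p := size s in let q := size t in
  [seq x + q | x <- s] ++ (p + q).+1 :: t.

Inductive tree := Leaf | Node of tree & tree.

(* number of internal nodes; Y_n = trees with nnodes t = n *)
Fixpoint nnodes (t : tree) : nat :=
  match t with Leaf => 0 | Node l r => (nnodes l + nnodes r).+1 end.

Fixpoint gamma (t : tree) : seq nat :=
  match t with Leaf => [::] | Node l r => pvee (gamma l) (gamma r) end.

(* lambda, by recursion on the length (fuel); for a permutation sigma of [n],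
   the maximum entry is n and its position is sigma^{-1}(n). *)
Fixpoint lambda_rec (fuel : nat) (s : seq nat) : tree :=
  match fuel with
  | 0 => Leaf
  | f.+1 =>
    match s with
    | [::] => Leaf
    | _ :: _ =>
      let j := index (foldr maxn 0 s) s in
      Node (lambda_rec f (st (take j s))) (lambda_rec f (st (drop j.+1 s)))
    end
  end.

Definition lambda (s : seq nat) : tree := lambda_rec (size s) s.

(* restriction of rho in S_n to R ⊆ [n]; R is given as a set of 0-based
   positions i : 'I_n (standing for i+1 ∈ [n]), taken in increasing order. *)
Definition prestr (n : nat) (R : {set 'I_n}) (rho : seq nat) : seq nat :=
  st [seq nth 0 rho (val i) | i <- enum 'I_n & i \in R].

Definition trestr (n : nat) (R : {set 'I_n}) (r : tree) : tree :=
  lambda (prestr R (gamma r)).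

From mathcomp Require Import all_boot zify.

Set Implicit Arguments.
Unset Strict Implicit.
Unset Printing Implicit Defensive.

(* Every [gamma r] is a 132-avoiding permutation, since [sigma \vee tau] of
   132-avoiding [sigma] and [tau] is again 132-avoiding.  Conversely a
   132-avoiding permutation, split at its maximum [n] as [u ++ n :: v], has
   every entry of [u] above every entry of [v], hence equals
   [st u \vee st v]; so [gamma (lambda sigma) = sigma] on 132-avoiding
   permutations.  Pattern avoidance survives subsequences and
   standardization, so [gamma(r)|_R] is 132-avoiding and is therefore
   recovered by [gamma \o lambda]. *)

Definition avoid132 (s : seq nat) : Prop :=
  forall a b c, subseq [:: a; b; c] s -> ~~ (a < c < b).

(* A duplicate-free [s] with [st s = s] is a permutation of [1..size s]. *)
Definition perm132 (s : seq nat) : Prop := [/\ uniq s, st s = s & avoid132 s].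

Lemma subseq_cat_split (T : eqType) (w u v : seq T) : subseq w (u ++ v) ->
  exists w1 w2, [/\ w = w1 ++ w2, subseq w1 u & subseq w2 v].
Proof.
move=> /subseqP [m size_m ->].
rewrite -(cat_take_drop (size u) m) mask_cat; last first.
  by rewrite size_takel // size_m size_cat leq_addr.
by exists (mask (take (size u) m) u), (mask (drop (size u) m) v); split;
  rewrite ?mask_subseq.
Qed.

Lemma avoid132_subseq s t : avoid132 s -> subseq t s -> avoid132 t.
Proof. by move=> av ts a b c abc; apply: av; apply: subseq_trans abc ts. Qed.

Lemma avoid132_map f s : {in s &, {mono f : x y / x < y}} ->
  avoid132 s -> avoid132 (map f s).
Proof.
move=> mono_f av a b c /subseqP [m _]; rewrite -map_mask.
have sub_s := mask_subseq m s.
case: (mask m s) sub_s => [|a' [|b' [|c' [|]]]] //= sub_s [-> -> ->].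
have mem : {subset [:: a'; b'; c'] <= s} := mem_subseq sub_s.
rewrite !mono_f; first exact: av sub_s.
all: by apply: mem; rewrite !inE eqxx ?orbT.
Qed.

Lemma avoid132_cat u v : {in u & v, forall x y, y < x} ->
  avoid132 u -> avoid132 v -> avoid132 (u ++ v).
Proof.
move=> uv avu avv a b c /subseq_cat_split [w1 [w2 [+ + +]]].
case: w1 => [|a1 [|b1 [|c1 [|]]]] //=.
- by move=> <- _; apply: avv.
- move=> [<- <-]; rewrite sub1seq => au /mem_subseq bcv.
  by have := uv a c au (bcv c _); rewrite !inE eqxx orbT => /(_ isT); lia.
- move=> [<- <- <-] /mem_subseq abu; rewrite sub1seq => cv.
  by have := uv a c (abu a _) cv; rewrite !inE !eqxx => /(_ isT); lia.
- by move=> [<- <- <- _] + _; apply: avu.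
Qed.

Lemma avoid132_rcons u m : {in u, forall x, x < m} ->
  avoid132 u -> avoid132 (rcons u m).
Proof.
move=> um avu a b c; rewrite -cats1 => /subseq_cat_split [w1 [w2 [+ + +]]].
case: w1 => [|a1 [|b1 [|c1 [|]]]] //.
- by move=> /= <- _; case: (a == m).
- by move=> [_ <-] _ /size_subseq.
- move=> [<- <- <-] /mem_subseq abu; rewrite sub1seq inE => /eqP ->.
  by have := um b (abu b _); rewrite !inE eqxx orbT => /(_ isT); lia.
- by move=> [<- <- <- _] + _; apply: avu.
Qed.

Lemma st_mono t : {in t &, {mono (fun x => (count (fun y => y < x) t).+1) :
  x y / x < y}}.
Proof.
move=> x y xt yt /=; rewrite ltnS; apply/idP/idP => [|lt_xy].
  apply: contraLR; rewrite -!leqNgt => le_yx.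
  by apply: sub_count => z /= ?; lia.
elim: t xt {yt} => //= z t IH; rewrite inE => /orP [/eqP <-|xt].
  rewrite ltnn lt_xy add0n add1n ltnS; apply: sub_count => w /= ?; lia.
by have := IH xt; case: (ltnP z x); case: (ltnP z y) => /=; lia.
Qed.

Lemma size_st t : size (st t) = size t.
Proof. exact: size_map. Qed.

Lemma st_map f t : {in t &, {mono f : x y / x < y}} -> st (map f t) = st t.
Proof.
move=> mono_f; rewrite /st -map_comp; apply/eq_in_map => x xt /=.
by rewrite count_map; congr S; apply: eq_in_count => y yt /=; apply: mono_f.
Qed.

Lemma st_idem t : st (st t) = st t.
Proof. exact: st_map (@st_mono t). Qed.

Lemma st_uniq t : uniq t -> uniq (st t).
Proof.
move=> ut; rewrite map_inj_in_uniq //; apply: incn_inj_in => x y xt yt.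
by rewrite leqNgt st_mono // -leqNgt.
Qed.

Lemma st_avoid132 t : avoid132 t -> avoid132 (st t).
Proof. exact: avoid132_map (@st_mono t). Qed.

Lemma st_bounds t x : x \in st t -> 0 < x <= size t.
Proof.
move=> /mapP [y yt ->] /=.
rewrite -(count_predC (fun z => z < y) t) -addn1 leq_add2l -has_count.
by apply/hasP; exists y; rewrite //= ltnn.
Qed.

Lemma st_cat_max u m v :
    {in u, forall x, x < m} -> {in v, forall y, y < m} ->
    {in u & v, forall x y, y < x} ->
  st (u ++ m :: v) = pvee (st u) (st v).
Proof.
move=> um vm uv; rewrite /pvee !size_st /st map_cat /= -map_comp.
have all_lt p x : {in p, forall z, z < x} -> count (fun z => z < x) p = size p.
  by move=> lt_x; rewrite -count_predT; apply: eq_in_count => z /lt_x ->.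
have none_lt p y : {in p, forall z, y <= z} -> count (fun z => z < y) p = 0.
  move=> ge_y; rewrite -(count_pred0 p); apply: eq_in_count => z /ge_y.
  by rewrite /= ltnNge => ->.
have ltF x y : x < y -> (y < x) = false by move=> /ltnW; rewrite ltnNge => ->.
congr (_ ++ _ :: _).
- apply/eq_in_map => x xu /=; rewrite count_cat /= (ltF _ _ (um x xu)).
  by rewrite (all_lt v x) ?add0n ?addSn // => y yv; apply: uv.
- by rewrite count_cat /= ltnn !all_lt.
- apply/eq_in_map => y yv; rewrite count_cat /= (ltF _ _ (vm y yv)) none_lt //.
  by move=> x xu; apply/ltnW/uv.
Qed.

Lemma uniq_cat_max u m v :
    {in u, forall x, x < m} -> {in v, forall y, y < m} ->
    {in u & v, forall x y, y < x} ->
  uniq (u ++ m :: v) = uniq u && uniq v.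
Proof.
move=> um vm uv.
have mu : (m \in u) = false by apply/negP => /um; rewrite ltnn.
have mv : (m \in v) = false by apply/negP => /vm; rewrite ltnn.
have uvF : has (mem u) v = false.
  by apply/hasPn => y yv; apply/negP => yu; have := uv y y yu yv; rewrite ltnn.
by rewrite cat_uniq /= mu mv uvF.
Qed.

Lemma size_pvee a b : size (pvee a b) = (size a + size b).+1.
Proof. by rewrite size_cat size_map /= addnS. Qed.

Lemma perm132_pvee a b : perm132 a -> perm132 b -> perm132 (pvee a b).
Proof.
move=> [ua sa ava] [ub sb avb].
have a_bnd x : x \in a -> 0 < x <= size a by rewrite -{1}sa => /st_bounds.
have b_bnd y : y \in b -> 0 < y <= size b by rewrite -{1}sb => /st_bounds.
set U := map (addn^~ (size b)) a; set M := (size a + size b).+1.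
have pveeE : pvee a b = U ++ M :: b by [].
have UM x : x \in U -> x < M by move=> /mapP [y /a_bnd ? ->]; lia.
have bM y : y \in b -> y < M by move=> /b_bnd; lia.
have Ub x y : x \in U -> y \in b -> y < x.
  by move=> /mapP [z /a_bnd ? ->] /b_bnd; lia.
have mono_shift : {in a &, {mono addn^~ (size b) : x y / x < y}}.
  by move=> x y _ _; apply: ltn_add2r.
split.
- by rewrite pveeE uniq_cat_max // map_inj_uniq ?ua ?ub //; apply: addIn.
- by rewrite {1}pveeE st_cat_max // st_map // sa sb.
- rewrite pveeE -cat_rcons; apply: avoid132_cat.
  + by move=> x y; rewrite mem_rcons inE => /orP [/eqP -> /bM|/Ub]; apply.
  + exact/avoid132_rcons/avoid132_map.
  + exact: avb.
Qed.

Lemma size_gamma r : size (gamma r) = nnodes r.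
Proof. by elim: r => //= l IHl r IHr; rewrite size_pvee IHl IHr. Qed.

Lemma gamma_perm132 r : perm132 (gamma r).
Proof.
elim: r => [|l IHl r IHr] /=; last exact: perm132_pvee.
by split=> // a b c.
Qed.

Lemma perm132_st_subseq s t : perm132 s -> subseq t s -> perm132 (st t).
Proof.
move=> [us _ avs] ts; split; first exact: st_uniq (subseq_uniq ts us).
  exact: st_idem.
exact: st_avoid132 (avoid132_subseq avs ts).
Qed.

Lemma perm132_prestr n (R : {set 'I_n}) s :
  size s = n -> perm132 s -> perm132 (prestr R s).
Proof.
move=> size_s ps; apply: perm132_st_subseq ps _.
rewrite -{2}(mkseq_nth 0 s) /mkseq size_s -val_enum_ord map_comp.
by apply/map_subseq/map_subseq/filter_subseq.
Qed.

Lemma foldr_maxn_ge s x : x \in s -> x <= foldr maxn 0 s.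
Proof.
elim: s => //= y s IH; rewrite inE leq_max => /orP [/eqP ->|/IH ->].
  by rewrite leqnn.
by rewrite orbT.
Qed.

Lemma foldr_maxn_mem s : s != [::] -> foldr maxn 0 s \in s.
Proof.
elim: s => // x s IH _ /=; rewrite inE.
have [->|ns] := eqVneq s [::]; first by rewrite maxn0 eqxx.
by rewrite /maxn; case: ltnP => _; rewrite ?IH ?eqxx ?orbT.
Qed.

Lemma perm132_split_max s : perm132 s -> s != [::] ->
  let j := index (foldr maxn 0 s) s in
  s = pvee (st (take j s)) (st (drop j.+1 s)).
Proof.
move=> [us ss avs] ns /=; set m := foldr maxn 0 s; set j := index m s.
set A := take j s; set B := drop j.+1 s.
have sE : s = A ++ m :: B by rewrite -drop_index ?cat_take_drop ?foldr_maxn_mem.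
have le_m x : x \in s -> x <= m by apply: foldr_maxn_ge.
move: us; rewrite [in uniq _]sE cat_uniq /= => /and4P [_ /norP [mA disjAB] mB _].
have Am x : x \in A -> x < m.
  move=> xA; rewrite ltn_neqAle le_m ?sE ?mem_cat ?xA // andbT.
  by apply: contraNneq mA => <-.
have Bm y : y \in B -> y < m.
  move=> yB; rewrite ltn_neqAle le_m ?sE ?mem_cat ?inE ?yB ?orbT // andbT.
  by apply: contraNneq mB => <-.
have AB x y : x \in A -> y \in B -> y < x.
  move=> xA yB; case: ltngtP => // [lt_xy|eq_xy].
    have : subseq [:: x; m; y] s.
      by rewrite sE -cat1s; apply: cat_subseq; rewrite ?sub1seq //= eqxx sub1seq.
    by move=> /avs; rewrite lt_xy Bm.
  by move: disjAB => /hasPn /(_ y yB); rewrite eq_xy xA.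
by rewrite -{1}ss {1}sE st_cat_max.
Qed.

Lemma lambda_recS f s : s != [::] ->
  let j := index (foldr maxn 0 s) s in
  lambda_rec f.+1 s =
    Node (lambda_rec f (st (take j s))) (lambda_rec f (st (drop j.+1 s))).
Proof. by case: s. Qed.

Lemma lambda_recK f s : size s <= f -> perm132 s -> gamma (lambda_rec f s) = s.
Proof.
elim: f s => [|f IH] s size_s ps; first by case: s size_s {ps}.
have [->//|ns] := eqVneq s [::].
have /= -> := lambda_recS f ns; have /= sE := perm132_split_max ps ns.
set A := st _ in sE *; set B := st _ in sE *.
have pA : perm132 A := perm132_st_subseq ps (take_subseq _ _).
have pB : perm132 B := perm132_st_subseq ps (drop_subseq _ _).
have lt_f : size A + size B <= f by rewrite -ltnS -size_pvee -sE.
rewrite /= !IH // -?sE //; apply: leq_trans lt_f.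
  exact: leq_addl.
exact: leq_addr.
Qed.

Lemma lambdaK s : perm132 s -> gamma (lambda s) = s.
Proof. exact: lambda_recK. Qed.

Theorem lemma8p5 (n : nat) (R : {set 'I_n}) (r : tree) :
  nnodes r = n -> prestr R (gamma r) = gamma (trestr R r).
Proof.
move=> nodes_r; rewrite /trestr lambdaK //.
by apply: (perm132_prestr R _ (gamma_perm132 r)); rewrite size_gamma.
Qed.
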